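(* Let $\mathcal S$ be a Stone pseudovariety of $\Omega$-algebras and let $X$ be a topological space. Then there exists an $\mathcal S$-free Stone topological algebra over $X$, and it is uniquely determined up to continuous isomorphism.
   Context: $\Omega=\biguplus_n\Omega_n$ is a topological signature; a topological $\Omega$-algebra is a topological space $A$ with continuous evaluation maps $\Omega_n\times A^n\to A$. A Stone topological algebra is a topological algebra whose underlying space is compact Hausdorff and 0-dimensional. A Stone pseudovariety is a nonempty class of Stone topological $\Omega$-algebras closed under: images under onto continuous homomorphisms whose codomain is a Stone topological algebra, closed subalgebras, and finite direct products. For a class $\mathcal C$, a topological algebra is residually $\mathcal C$ if any two distinct elements are separated by a continuous homomorphism into a member of $\mathcal C$. A continuous map $\iota:X\to S$ into a topological algebra is a generating mapping if $\iota(X)$ generates (algebraically) a dense subalgebra of $S$. An $\mathcal S$-free Stone topological algebra over $X$ is a continuous generating mapping $\iota:X\to S$ into a Stone topological algebra $S$ that is residually $\mathcal S$, such that for every continuous map $\varphi:X\to T$ with $T\in\mathcal S$ there is a unique continuous homomorphism $\hat\varphi:S\to T$ with $\hat\varphi\circ\iota=\varphi$. *)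

From HB Require Import structures.
From mathcomp Require Import all_boot all_order all_algebra.
From mathcomp Require Import all_classical all_reals all_analysis.
Set Implicit Arguments. Unset Strict Implicit. Unset Printing Implicit Defensive.
Local Open Scope classical_set_scope.

(* A topological signature: Omega n is the (topological) space of n-ary
   operation symbols; Omega = disjoint union of the Omega n. *)
Definition tsignature := nat -> topologicalType.

(* An Omega-algebra structure on a topological space (continuity of the
   evaluation maps is a separate predicate, see [topological_algebra]). *)
Record topAlg (Omega : tsignature) := TopAlg {
  carrier :> topologicalType;
  op : forall n, Omega n -> ('I_n -> carrier) -> carrier }.
Arguments op {Omega} t {n} _ _.

Section Defs.
Variable Omega : tsignature.
Implicit Types A B : topAlg Omega.

Definition topological_algebra A :=
  forall n, continuous
    (fun p : (Omega n * prod_topology (fun _ : 'I_n => (A : topologicalType)))%type =>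
       op A p.1 p.2).

Definition zero_dim (T : topologicalType) :=
  forall (x : T) (U : set T), nbhs x U ->
    exists V : set T, clopen V /\ V x /\ V `<=` U.

Definition Stone_space (T : topologicalType) :=
  compact [set: T] /\ hausdorff_space T /\ zero_dim T.

Definition Stone_algebra A := topological_algebra A /\ Stone_space A.

Definition is_hom A B (f : A -> B) :=
  forall n (w : Omega n) (a : 'I_n -> A), f (op A w a) = op B w (f \o a).

Definition op_closed A (C : set A) :=
  forall n (w : Omega n) (a : 'I_n -> A), (forall i, C (a i)) -> C (op A w a).

Definition subAlg A (C : set A) (hC : op_closed C) : topAlg Omega :=
  @TopAlg Omega (set_type C)
    (fun n w a => SigSub (mem_set (hC n w (fun i => set_val (a i))
                     (fun i => set_valP (a i))))).

Definition prodAlg (k : nat) (F : 'I_k -> topAlg Omega) : topAlg Omega :=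
  @TopAlg Omega (prod_topology (fun i => (F i : topologicalType)))
    (fun n w a => fun i => op (F i) w (fun j => a j i)).

Definition Stone_pseudovariety (S : topAlg Omega -> Prop) :=
  [/\ (forall A, S A -> Stone_algebra A),
      (exists A, S A),
      (forall A B (f : A -> B), S A -> Stone_algebra B -> continuous f ->
          is_hom f -> (forall y : B, exists x, f x = y) -> S B),
      (forall A (C : set A) (hC : op_closed C), S A -> closed C ->
          S (subAlg hC)) &
      (forall (k : nat) (F : 'I_k -> topAlg Omega), (forall i, S (F i)) ->
          S (prodAlg F))].

Definition residually (C : topAlg Omega -> Prop) A :=
  forall x y : A, x <> y ->
    exists B (f : A -> B), C B /\ continuous f /\ is_hom f /\ f x <> f y.

Definition gen_subalg A (Y : set A) : set A :=
  \bigcap_(Z in [set Z : set A | Y `<=` Z /\ op_closed Z]) Z.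

Definition generating_mapping (X : topologicalType) A (iota : X -> A) :=
  closure (gen_subalg (range iota)) = [set: A].

Definition S_free_Stone (S : topAlg Omega -> Prop) (X : topologicalType)
    A (iota : X -> A) :=
  [/\ Stone_algebra A, continuous iota, generating_mapping iota,
      residually S A &
      forall (T : topAlg Omega) (phi : X -> T), S T -> continuous phi ->
        exists! g : A -> T, continuous g /\ is_hom g /\ g \o iota = phi].

End Defs.

From HB Require Import structures.
From mathcomp Require Import all_boot all_order all_algebra.
From mathcomp Require Import all_classical all_reals all_analysis.
Local Open Scope classical_set_scope.

(* Up to isomorphism, the pairs (T, phi) with T in S and phi : X -> T
   continuous with topologically generating image are coded by structures on a
   fixed set: a point t of T is sent to the family of sets D of terms whose
   values accumulate at t, which is injective because T is zero-dimensional.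
   The free algebra is the closure of the subalgebra generated by X in the
   product of one representative for each code. It is Stone and residually S
   because the product is; a continuous phi : X -> T with T in S extends through
   the projection onto the code of the closed subalgebra topologically generated
   by phi(X), and uniquely since homomorphisms agreeing on generators agree.

   A free algebra A extends every continuous phi : X -> B into a
   Stone algebra B residually in S: for a in A, the fibres h^-1(g a) over the
   pairs of continuous homomorphisms h : B -> T, g : A -> T with T in S and
   g o iota = h o phi are nonempty, closed and directed (by binary products), so
   they meet by compactness, and residuality leaves a single common point
   psi(a). The graph of psi is closed, so psi is continuous. Two free algebras
   thus map into each other, and both composites fix the generators. *)

Section Topology.
Context {T U V : topologicalType}.

Lemma comp_continuous {f : T -> U} {g : U -> V} :
  continuous f -> continuous g -> continuous (g \o f).
Proof. by move=> cf cg x; apply: continuous_comp; [exact: cf|exact: cg]. Qed.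

Lemma fst_continuous : continuous (@fst T U).
Proof. by case=> a b; apply: cvg_fst. Qed.

Lemma snd_continuous : continuous (@snd T U).
Proof. by case=> a b; apply: cvg_snd. Qed.

Lemma pair_continuous {f : T -> U} {g : T -> V} :
  continuous f -> continuous g -> continuous (fun x => (f x, g x)).
Proof. by move=> cf cg x; apply: cvg_pair; [exact: cf|exact: cg]. Qed.

Lemma closure_minimal {A B : set T} : A `<=` B -> closed B -> closure A `<=` B.
Proof. by move=> AB /closure_id ->; exact: closureS. Qed.

Lemma closed_eqfun (f g : T -> U) :
  hausdorff_space U -> continuous f -> continuous g -> closed [set x | f x = g x].
Proof.
move=> hU cf cg p clp; apply: contrapT => /eqP fg.
move: hU; rewrite open_hausdorff => /(_ _ _ fg) [[A B] /= [fA gB] [oA oB AB]].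
have nA : nbhs p (f @^-1` A).
  by apply: cf; apply: open_nbhs_nbhs; split => //; exact: set_mem.
have nB : nbhs p (g @^-1` B).
  by apply: cg; apply: open_nbhs_nbhs; split => //; exact: set_mem.
have [z [/= fgz [Az Bz]]] := clp _ (filterI nA nB).
by move/eqP: AB => /seteqP [+ _] => /(_ (f z)); apply; split => //; rewrite fgz.
Qed.

Lemma compact_directed_meet (I : set (set T)) :
  compact [set: T] -> I !=set0 -> (forall K, I K -> closed K) ->
  (forall K, I K -> K !=set0) ->
  (forall K1 K2, I K1 -> I K2 -> exists2 K, I K & K `<=` K1 `&` K2) ->
  exists x, forall K, I K -> K x.
Proof.
move=> cT [K0 IK0] clI neI dirI.
have FI : ProperFilter (filter_from I id).
  exact: filter_from_proper (filter_from_filter (ex_intro _ K0 IK0) dirI) neI.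
have [|x [_ clx]] := cT _ FI; first by exists K0.
exists x => K IK; apply: (clI K IK) => N nN.
by apply: clx nN; exists K.
Qed.

Lemma closed_graph_continuous (f : T -> U) :
  compact [set: T] -> hausdorff_space T -> compact [set: U] ->
  closed [set p : T * U | p.2 = f p.1] -> continuous f.
Proof.
move=> cT hT cU clG; apply/continuous_closedP => C clC.
have -> : f @^-1` C = fst @` ([set p | p.2 = f p.1] `&` (snd @^-1` C)).
  apply/seteqP; split; first by move=> a Ca; exists (a, f a).
  by move=> _ [[a b] [/= -> Cb] <-].
apply: compact_closed hT _; apply: continuous_compact.
  exact/continuous_subspaceT/fst_continuous.
apply: (@subclosed_compact _ _ [set: T * U]) => //.
  by apply: closedI => //; apply: preimage_closed => // x _; exact: snd_continuous.
by rewrite -setXTT; exact: compact_setX.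
Qed.

End Topology.

Section SetType.
Context {T : topologicalType} {C : set T}.

Lemma open_set_type (U : set (set_type C)) :
  open U <-> exists2 V, open V & set_val @^-1` V = U.
Proof. by split; case=> V oV <-; exists V. Qed.

Lemma set_val_continuous : continuous (@set_val T C).
Proof. exact: initial_continuous. Qed.

Lemma continuous_set_type (Y : topologicalType) (f : Y -> set_type C) :
  continuous (set_val \o f) -> continuous f.
Proof. exact: continuous_comp_initial. Qed.

Lemma compact_set_type : compact C -> compact [set: set_type C].
Proof.
move=> cC F PF _.
have [|x [Cx clx]] := cC (set_val @ F) _ _.
  rewrite /fmap /=; have -> : set_val @^-1` C = [set: set_type C].
    by apply/seteqP; split => // -[y /= yC] _; exact: set_mem.
  exact: filterT.
exists (exist _ x (mem_set Cx)); split => //.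
move=> A B FA; rewrite nbhsE; case=> O [/open_set_type [V oV eO] Ox] OB.
have Vx : V x by rewrite -eO in Ox.
have FA' : (set_val @ F) (set_val @` A).
  by rewrite /fmap /=; apply: filterS FA => y Ay; exists y.
have [_ [[a Aa <-] Va]] := clx _ _ FA' (open_nbhs_nbhs (conj oV Vx)).
by exists a; split => //; apply: OB; rewrite -eO.
Qed.

Lemma hausdorff_set_type : hausdorff_space T -> hausdorff_space (set_type C).
Proof.
rewrite !open_hausdorff => hT x y xy.
have /hT [[U V] /= [xU yV] [oU oV UV]] : set_val x != set_val y.
  by apply: contra xy => /eqP /val_inj ->.
exists (set_val @^-1` U, set_val @^-1` V) => /=.
  by rewrite !inE; split; apply: set_mem.
split; [by apply/open_set_type; exists U|by apply/open_set_type; exists V|].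
apply/eqP/seteqP; split => // z [Uz Vz].
by move/eqP: UV => /seteqP [+ _] => /(_ (set_val z)); apply.
Qed.

Lemma zero_dimensional_set_type :
  zero_dimensional T -> zero_dimensional (set_type C).
Proof.
move=> zT x y xy.
have /zT [U [cU Ux Uy]] : set_val x != set_val y.
  by apply: contra xy => /eqP /val_inj ->.
exists (set_val @^-1` U); split => //.
exact: preimage_clopen cU set_val_continuous.
Qed.

Lemma dense_set_type (Y : set (set_type C)) :
  C `<=` closure (set_val @` Y) -> closure Y = [set: set_type C].
Proof.
move=> CY; apply/seteqP; split => // y _ N.
rewrite nbhsE; case=> O [/open_set_type [V oV eO] Oy] ON.
have Vy : V (set_val y) by rewrite -eO in Oy.
have [_ [[q Yq <-] Vq]] := CY _ (set_valP y) V (open_nbhs_nbhs (conj oV Vy)).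
by exists q; split => //; apply: ON; rewrite -eO.
Qed.

End SetType.

Section Product.
Context {I : choiceType} (K : I -> topologicalType).

Lemma continuous_into_prod (Y : topologicalType) (f : Y -> prod_topology K) :
  (forall i, continuous (fun y => f y i)) -> continuous f.
Proof.
move=> cf y; apply/cvg_sup => i.
exact: (@continuous_comp_initial _ Y (K i) (fun g : (forall i, K i) => g i) f (cf i)).
Qed.

Lemma continuous_proj (i : I) : continuous (fun f : prod_topology K => f i).
Proof. exact: proj_continuous. Qed.

Lemma compact_prod : (forall i, compact [set: K i]) -> compact [set: prod_topology K].
Proof.
move=> cK; have := @tychonoff I K (fun i => setT) cK.
by congr compact; apply/seteqP; split.
Qed.

End Product.

Lemma continuous_args {W A B : topologicalType} {n : nat} {f : A -> B} :
  continuous f ->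
  continuous (fun p : (W * prod_topology (fun _ : 'I_n => A))%type =>
                (p.1, (f \o p.2 : prod_topology (fun _ : 'I_n => B)))).
Proof.
move=> cf; apply: pair_continuous; first exact: fst_continuous.
apply: continuous_into_prod => j.
exact: comp_continuous (comp_continuous snd_continuous (continuous_proj _ j)) cf.
Qed.

Lemma closure_box (n : nat) (A : topologicalType) (Z : set A)
    (a : prod_topology (fun _ : 'I_n => A)) :
  (forall i, closure Z (a i)) ->
  closure [set b : prod_topology (fun _ : 'I_n => A) | forall i, Z (b i)] a.
Proof.
set box := [set b : prod_topology _ | _].
suff box_prefix : forall k (b : prod_topology (fun _ : 'I_n => A)),
    (forall i : 'I_n, (i < k)%N -> closure Z (b i)) ->
    (forall i : 'I_n, (k <= i)%N -> Z (b i)) -> closure box b.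
  by move=> ha; apply: (box_prefix n) => // i; rewrite leqNgt ltn_ord.
elim=> [|k IH] b clb Zb; first by apply: subset_closure => i; apply: Zb.
have [kn|nk] := ltnP k n; last first.
  apply: IH => i ik; first by apply: clb; rewrite ltnS ltnW.
  by have := leq_trans nk ik; rewrite leqNgt ltn_ord.
pose ik : 'I_n := Ordinal kn.
pose move_k : A -> prod_topology (fun _ : 'I_n => A) := dfwith b ik.
have clk : closure Z `<=` move_k @^-1` closure box.
  apply: closure_minimal => [z Zz|]; last first.
    apply: preimage_closed => [z _|]; last exact: closed_closure.
    exact: dfwith_continuous.
  apply: IH => j; rewrite /move_k; have [<-|ne] := eqVneq ik j.
  - by rewrite /= ltnn.
  - by rewrite dfwithout // => jk; apply: clb; rewrite ltnS ltnW.
  - by rewrite dfwithin.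
  - rewrite dfwithout // => kj; apply: Zb; rewrite ltn_neqAle kj andbT.
    by apply: contra ne => /eqP e; apply/eqP/val_inj.
have -> : b = move_k (b ik).
  apply: functional_extensionality_dep => j; rewrite /move_k.
  by have [<-|ne] := eqVneq ik j; rewrite ?dfwithin ?dfwithout.
exact/clk/clb.
Qed.

Lemma Stone_spaceP (T : topologicalType) :
  Stone_space T <-> [/\ compact [set: T], hausdorff_space T & zero_dimensional T].
Proof.
split=> [[cT [hT zT]]|[cT hT zT]].
  split=> // x y /(hausdorff_accessible hT) [U [oU xU yU]].
  have [V [cV [Vx VU]]] := zT x U (open_nbhs_nbhs (conj oU (set_mem xU))).
  by exists V; split => // /VU; move: yU; rewrite inE.
do 2!split => //; move=> x U xU.
have [D [Dx cD] DU] := zero_dimensional_cvg hT zT cT xU.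
by exists D.
Qed.

Section UniversalAlgebra.
Context {Omega : tsignature}.
Implicit Types A B : topAlg Omega.

Lemma gen_subalg_min {A} {Y Z : set A} : Y `<=` Z -> op_closed Z -> gen_subalg Y `<=` Z.
Proof. by move=> YZ cZ x; apply; split. Qed.

Lemma sub_gen_subalg {A} (Y : set A) : Y `<=` gen_subalg Y.
Proof. by move=> x Yx Z [YZ _]; apply: YZ. Qed.

Lemma op_closed_gen_subalg {A} (Y : set A) : op_closed (gen_subalg Y).
Proof. by move=> n w a ha Z hZ; apply: hZ.2 => i; exact: ha. Qed.

Lemma op_closed_preimage {A B} {f : A -> B} {W : set B} :
  is_hom f -> op_closed W -> op_closed (f @^-1` W).
Proof. by move=> hf cW n w a ha; rewrite /= hf; apply: cW. Qed.

Lemma op_closed_image {A B} {f : A -> B} {Y : set A} :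
  is_hom f -> op_closed Y -> op_closed (f @` Y).
Proof.
move=> hf cY n w b hb.
have [a ha] :=
  choice (fun i => let: ex_intro2 a Ya fa := hb i in ex_intro _ a (conj Ya fa)).
exists (op A w a); first by apply: cY => i; exact: (ha i).1.
by rewrite hf; congr (op B w _); apply: funext => i; exact: (ha i).2.
Qed.

Lemma op_closed_eqfun {A B} {f g : A -> B} :
  is_hom f -> is_hom g -> op_closed [set a | f a = g a].
Proof.
move=> hf hg n w a ha /=; rewrite hf hg; congr (op B w _).
by apply: funext => i; exact: ha.
Qed.

Lemma op_closed_closure {A} {Z : set A} :
  topological_algebra A -> op_closed Z -> op_closed (closure Z).
Proof.
move=> tA cZ n w a /closure_box.
pose opw : prod_topology (fun _ : 'I_n => A) -> A := op A w.
suff : closure [set b : prod_topology (fun _ : 'I_n => A) | forall i, Z (b i)]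
         `<=` opw @^-1` closure Z by apply.
apply: closure_minimal => [b Zb|]; first by apply: subset_closure; exact: cZ.
have cop : continuous opw.
  exact: comp_continuous
    (pair_continuous (@cst_continuous _ _ w) (fun _ => cvg_id)) (tA n).
by apply: preimage_closed => [b _|]; [exact: cop|exact: closed_closure].
Qed.

Lemma is_hom_comp {A B} {C : topAlg Omega} {f : A -> B} {g : B -> C} :
  is_hom f -> is_hom g -> is_hom (g \o f).
Proof. by move=> hf hg n w a /=; rewrite hf hg. Qed.

Lemma generating_closed {X : topologicalType} {A} {iota : X -> A} (W : set A) :
  generating_mapping iota -> closed W -> op_closed W -> (forall x, W (iota x)) ->
  forall a, W a.
Proof.
move=> gen cW oW iW a.
have : closure (gen_subalg (range iota)) a by rewrite gen.
by apply: (closure_minimal _ cW); apply: gen_subalg_min oW => _ [x _ <-].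
Qed.

Lemma generating_hom_eq {X : topologicalType} {A B} {iota : X -> A} {g1 g2 : A -> B} :
  generating_mapping iota -> hausdorff_space B ->
  continuous g1 -> continuous g2 -> is_hom g1 -> is_hom g2 ->
  g1 \o iota = g2 \o iota -> g1 = g2.
Proof.
move=> gen hB c1 c2 h1 h2 e; apply: funext.
apply: (generating_closed [set a | g1 a = g2 a] gen).
- exact: closed_eqfun.
- exact: op_closed_eqfun.
- by move=> x; have := congr1 (@^~ x) e.
Qed.

Lemma generating_endo_id {X : topologicalType} {A} {iota : X -> A} {f : A -> A} :
  generating_mapping iota -> hausdorff_space A -> continuous f -> is_hom f ->
  f \o iota = iota -> f = id.
Proof.
move=> gen hA cf hf fi.
exact: generating_hom_eq gen hA cf (fun _ => cvg_id) hf (fun _ _ _ => erefl) fi.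
Qed.

Inductive term (X : Type) : Type :=
  | Var of X
  | App n of Omega n & ('I_n -> term X).
Arguments Var {X}.
Arguments App {X n}.

Section TermEvaluation.
Variables (A : topAlg Omega) (X : Type) (phi : X -> A).

Fixpoint term_eval (t : term X) : A :=
  match t with
  | Var x => phi x
  | App n w s => op A w (fun i => term_eval (s i))
  end.

Lemma gen_subalg_range_eval : gen_subalg (range phi) `<=` range term_eval.
Proof.
apply: gen_subalg_min => [_ [x _ <-]|n w a ha]; first by exists (Var x).
have [s hs] := choice (fun i => let: ex_intro2 t _ ht := ha i in ex_intro _ t ht).
by exists (App w s) => //=; congr (op A w _); apply: funext => i; exact: hs.
Qed.

End TermEvaluation.
Arguments term_eval {A X} phi t.
Arguments gen_subalg_range_eval {A X} phi.

Lemma term_code_inj {X : topologicalType} {A} {phi : X -> A} :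
  generating_mapping phi -> hausdorff_space A -> zero_dimensional A ->
  injective (fun a : A => [set D | closure (term_eval phi @` D) a]).
Proof.
(* a clopen U separates a from a'; the terms with value in U accumulate at a only *)
move=> gen hA zA a a' eaa'; apply: contrapT => /eqP /zA [U [[oU cU] Ua Ua']].
have clU : closure (term_eval phi @` (term_eval phi @^-1` U)) `<=` U.
  by apply: (closure_minimal _ cU) => _ [s Us <-].
apply/Ua'/clU; move: eaa' => /(congr1 (@^~ (term_eval phi @^-1` U))) /= <- N nN.
have dense_eval : closure (range (term_eval phi)) a.
  by apply: (closureS (gen_subalg_range_eval phi)); rewrite gen.
have [_ [[s _ <-] [Ns Us]]] := dense_eval _ (filterI nN (open_nbhs_nbhs (conj oU Ua))).
by exists (term_eval phi s); split => //; exists s.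
Qed.

Definition prod_alg {I : Type} (F : I -> topAlg Omega) : topAlg Omega :=
  @TopAlg Omega (prod_topology (fun i => (F i : topologicalType)))
    (fun n w a i => op (F i) w (fun j => a j i)).

Definition prod_map {I : Type} {F : I -> topAlg Omega} {Y : Type}
  (f : forall i, Y -> F i) : Y -> prod_alg F := fun y i => f i y.

Lemma is_hom_prod_map {I : Type} {F : I -> topAlg Omega} {Y : topAlg Omega}
  (f : forall i, Y -> F i) :
  (forall i, is_hom (f i)) -> is_hom (prod_map f).
Proof. by move=> hf n w a; apply: functional_extensionality_dep => i; exact: hf. Qed.

Lemma continuous_prod_map {I : choiceType} {F : I -> topAlg Omega} {Y : topologicalType}
  (f : forall i, Y -> F i) :
  (forall i, continuous (f i)) -> continuous (prod_map f).
Proof. exact: continuous_into_prod. Qed.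

Lemma topological_prod_alg (I : choiceType) (F : I -> topAlg Omega) :
  (forall i, topological_algebra (F i)) -> topological_algebra (prod_alg F).
Proof.
move=> tF n; apply: continuous_into_prod => i.
exact: comp_continuous (continuous_args (continuous_proj _ i)) (tF i n).
Qed.

Lemma Stone_prod_alg (I : choiceType) (F : I -> topAlg Omega) :
  (forall i, Stone_algebra (F i)) -> Stone_algebra (prod_alg F).
Proof.
move=> SF; split; first by apply: topological_prod_alg => i; case: (SF i).
have /all_and3 [cF hF zF] i := (Stone_spaceP (F i)).1 (SF i).2.
apply/Stone_spaceP; split.
- exact: compact_prod.
- exact: hausdorff_product.
- exact: zero_dimension_prod.
Qed.

Lemma topological_subAlg {A} {C : set A} {hC : op_closed C} :
  topological_algebra A -> topological_algebra (subAlg hC).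
Proof.
move=> tA n; apply: continuous_set_type.
exact: comp_continuous (continuous_args set_val_continuous) (tA n).
Qed.

Lemma Stone_subAlg {A} {C : set A} {hC : op_closed C} :
  Stone_algebra A -> closed C -> Stone_algebra (subAlg hC).
Proof.
move=> [tA /Stone_spaceP [cA hA zA]] cC; split; first exact: topological_subAlg.
apply/Stone_spaceP; split.
- by apply: compact_set_type; exact: subclosed_compact cA _.
- exact: hausdorff_set_type.
- exact: zero_dimensional_set_type.
Qed.

Lemma is_hom_proj {I : Type} {F : I -> topAlg Omega} (i : I) :
  is_hom (fun p : prod_alg F => p i).
Proof. by []. Qed.

Lemma is_hom_set_val {A} {C : set A} {hC : op_closed C} :
  is_hom (fun c : subAlg hC => set_val c).
Proof. by []. Qed.

Section TopologicallyGenerated.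
Variables (A : topAlg Omega) (tA : topological_algebra A).
Variables (X : topologicalType) (phi : X -> A).

Definition topgen_alg : topAlg Omega :=
  subAlg (op_closed_closure tA (op_closed_gen_subalg (range phi))).

Lemma closure_gen_subalg_range (x : X) : closure (gen_subalg (range phi)) (phi x).
Proof. by apply: subset_closure; apply: sub_gen_subalg; exists x. Qed.

Definition topgen_map (x : X) : topgen_alg :=
  exist _ (phi x) (mem_set (closure_gen_subalg_range x)).

Lemma continuous_topgen_map : continuous phi -> continuous topgen_map.
Proof. by move=> cphi; apply: continuous_set_type. Qed.

Lemma generating_topgen_map : generating_mapping topgen_map.
Proof.
apply: dense_set_type; apply: closureS; apply: gen_subalg_min.
  by move=> _ [x _ <-]; exists (topgen_map x) => //; apply: sub_gen_subalg; exists x.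
exact: op_closed_image is_hom_set_val (op_closed_gen_subalg _).
Qed.

End TopologicallyGenerated.

End UniversalAlgebra.
Arguments term_eval {Omega A X} phi t.
Arguments topgen_alg {Omega A} tA {X} phi.
Arguments topgen_map {Omega A} tA {X} phi x.
Arguments generating_topgen_map {Omega A} tA {X} phi.
Arguments continuous_topgen_map {Omega A} tA {X phi}.

Section Pseudovariety.
Variables (Omega : tsignature) (S : topAlg Omega -> Prop).
Hypothesis HS : Stone_pseudovariety S.

Lemma pv_Stone (A : topAlg Omega) : S A -> Stone_algebra A.
Proof. by case: HS => + _ _ _ _; apply. Qed.

Lemma pv_hausdorff (A : topAlg Omega) : S A -> hausdorff_space A.
Proof. by move=> /pv_Stone [_ /Stone_spaceP []]. Qed.

Lemma pv_subAlg (A : topAlg Omega) (C : set A) (hC : op_closed C) :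
  S A -> closed C -> S (subAlg hC).
Proof. by case: HS => _ _ _ + _; apply. Qed.

Lemma pv_prod (k : nat) (F : 'I_k -> topAlg Omega) :
  (forall i, S (F i)) -> S (prod_alg F).
Proof. by case: HS => _ _ _ _; apply. Qed.

End Pseudovariety.
Arguments pv_Stone {Omega S} HS {A}.
Arguments pv_hausdorff {Omega S} HS {A}.
Arguments pv_subAlg {Omega S} HS {A C hC}.
Arguments pv_prod {Omega S} HS {k F}.

(* [ltn_ord i : i < 0] computes to [false = true] *)
Definition ord0_rect (P : 'I_0 -> Type) (i : 'I_0) : P i :=
  False_rect _ (notF (ltn_ord i)).

Section BinaryProduct.
Context {Omega : tsignature}.

Definition pair_family (A B : topAlg Omega) (i : 'I_2) : topAlg Omega :=
  if val i is 0 then A else B.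

Definition pair_maps {Y : Type} {A B : topAlg Omega} (f : Y -> A) (g : Y -> B) :
  forall i, Y -> pair_family A B i :=
  fun i => match val i as m return Y -> (if m is 0 then A else B) with
           | 0 => f
           | _ => g
           end.

End BinaryProduct.

Section Extension.
Variables (Omega : tsignature) (S : topAlg Omega -> Prop).
Hypothesis HS : Stone_pseudovariety S.
Variables (X : topologicalType) (A : topAlg Omega) (iota : X -> A).
Variables (B : topAlg Omega) (phi : X -> B).
Hypotheses (freeA : S_free_Stone S iota) (StoneB : Stone_algebra B).
Hypotheses (resB : residually S B) (cphi : continuous phi).

Definition compatible {T : topAlg Omega} (h : B -> T) (g : A -> T) :=
  [/\ S T, continuous h /\ is_hom h, continuous g /\ is_hom g & g \o iota = h \o phi].

Definition coupled (a : A) (b : B) :=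
  forall T h g, @compatible T h g -> h b = g a.

Lemma compatible_fibre {T h g} (a : A) : @compatible T h g -> range h (g a).
Proof.
case=> ST [ch hh] [cg hg] e; have [_ _ gen _ _] := freeA.
have cB : compact [set: B] by case: StoneB => _ /Stone_spaceP [].
have clh : closed (range h).
  exact: compact_closed (pv_hausdorff HS ST)
    (continuous_compact (continuous_subspaceT ch) cB).
apply: (generating_closed (g @^-1` range h) gen).
- by apply: preimage_closed => // x _; exact: cg.
- exact: op_closed_preimage hg (op_closed_image hh (fun _ _ _ _ => I)).
- by move=> x; exists (phi x) => //; move: (congr1 (@^~ x) e) => /= ->.
Qed.

Lemma compatible_pair {T1 h1 g1 T2 h2 g2} :
  @compatible T1 h1 g1 -> @compatible T2 h2 g2 ->
  compatible (prod_map (pair_maps h1 h2)) (prod_map (pair_maps g1 g2)).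
Proof.
case=> S1 [ch1 hh1] [cg1 hg1] e1 [S2 [ch2 hh2] [cg2 hg2] e2]; split.
- by apply: (@pv_prod _ _ HS 2 (pair_family T1 T2)) => -[[|m] ?].
- by split; [apply: continuous_prod_map|apply: is_hom_prod_map] => -[[|m] ?].
- by split; [apply: continuous_prod_map|apply: is_hom_prod_map] => -[[|m] ?].
- apply: funext => x; apply: functional_extensionality_dep => -[[|m] ?] /=.
    exact: (congr1 (@^~ x) e1).
  exact: (congr1 (@^~ x) e2).
Qed.

Lemma compatible_trivial : exists T h g, @compatible T h g.
Proof.
pose F (_ : 'I_0) := B.
exists (prod_alg F), (prod_map (ord0_rect (fun i => B -> F i))),
  (prod_map (ord0_rect (fun i => A -> F i))); split.
- by apply: (@pv_prod _ _ HS 0 F) => -[].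
- by split; [apply: continuous_prod_map|apply: is_hom_prod_map] => -[].
- by split; [apply: continuous_prod_map|apply: is_hom_prod_map] => -[].
- by apply: funext => x; apply: functional_extensionality_dep => -[].
Qed.

Lemma coupled_total (a : A) : exists b, coupled a b.
Proof.
pose fibres := [set K | exists T h g, @compatible T h g /\ K = h @^-1` [set g a]].
have [b fb] : exists b, forall K, fibres K -> K b.
  apply: compact_directed_meet.
  - by case: StoneB => _ /Stone_spaceP [].
  - have [T [h [g c]]] := compatible_trivial.
    by exists (h @^-1` [set g a]), T, h, g.
  - move=> _ [T [h [g [[ST [ch _] _ _] ->]]]].
    apply: preimage_closed => [x _|]; first exact: ch.
    exact/accessible_closed_set1/hausdorff_accessible/(pv_hausdorff HS ST).
  - by move=> _ [T [h [g [/(compatible_fibre a) [b _ hb] ->]]]]; exists b.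
  - move=> _ _ [T1 [h1 [g1 [c1 ->]]]] [T2 [h2 [g2 [c2 ->]]]].
    exists (prod_map (pair_maps h1 h2) @^-1` [set prod_map (pair_maps g1 g2) a]).
      by do 3 eexists; split; first exact: compatible_pair c1 c2.
    move=> b /= E; split => /=.
      exact: (congr1 (@^~ (@Ordinal 2 0 isT)) E).
    exact: (congr1 (@^~ (@Ordinal 2 1 isT)) E).
by exists b => T h g c; apply: (fb (h @^-1` [set g a])); exists T, h, g.
Qed.

Lemma coupled_functional (a : A) (b b' : B) : coupled a b -> coupled a b' -> b = b'.
Proof.
move=> cb cb'; apply: contrapT => /resB [T [f [ST [cf [hf fbb']]]]].
have [_ _ _ _ univ] := freeA.
have [g [[cg [hg eg]] _]] := univ T (f \o phi) ST (comp_continuous cphi cf).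
have c : compatible f g by split.
by apply: fbb'; rewrite (cb _ _ _ c) (cb' _ _ _ c).
Qed.

Definition free_ext (a : A) : B := proj1_sig (cid (coupled_total a)).

Lemma coupled_free_ext (a : A) : coupled a (free_ext a).
Proof. exact: proj2_sig (cid (coupled_total a)). Qed.

Lemma free_ext_iota : free_ext \o iota = phi.
Proof.
apply: funext => x; apply: coupled_functional (coupled_free_ext _) _.
by move=> T h g [_ _ _ e]; move: (congr1 (@^~ x) e) => /= ->.
Qed.

Lemma is_hom_free_ext : is_hom free_ext.
Proof.
move=> n w a; apply: coupled_functional (coupled_free_ext _) _ => T h g c.
have [_ [_ hh] [_ hg] _] := c; rewrite hh hg; congr (op T w _).
by apply: funext => i; exact: coupled_free_ext c.
Qed.

Lemma closed_coupled : closed [set p : A * B | coupled p.1 p.2].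
Proof.
move=> p clp T h g c; have [ST [ch _] [cg _] _] := c.
suff : closure [set p : A * B | coupled p.1 p.2]
         `<=` [set q | (h \o snd) q = (g \o fst) q] by apply.
apply: closure_minimal => [q cq|]; first exact: cq _ _ _ c.
apply: closed_eqfun (pv_hausdorff HS ST) _ _.
  exact: comp_continuous snd_continuous ch.
exact: comp_continuous fst_continuous cg.
Qed.

Lemma continuous_free_ext : continuous free_ext.
Proof.
have [_ /Stone_spaceP [cA hA _]] : Stone_algebra A by case: freeA.
have [_ /Stone_spaceP [cB _ _]] := StoneB.
apply: closed_graph_continuous => //.
have -> : [set p : A * B | p.2 = free_ext p.1] = [set p | coupled p.1 p.2].
  apply/seteqP; split => [[a b] /= ->|[a b] /= cab]; first exact: coupled_free_ext.
  exact: coupled_functional cab (coupled_free_ext a).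
exact: closed_coupled.
Qed.

End Extension.

Lemma free_extension {Omega : tsignature} {S : topAlg Omega -> Prop} {X : topologicalType}
    {A : topAlg Omega} {iota : X -> A} {B : topAlg Omega} {phi : X -> B} :
  Stone_pseudovariety S -> S_free_Stone S iota -> Stone_algebra B ->
  residually S B -> continuous phi ->
  exists psi : A -> B, [/\ continuous psi, is_hom psi & psi \o iota = phi].
Proof.
move=> HS freeA StoneB resB cphi.
exists (@free_ext _ _ HS _ _ _ _ phi freeA StoneB); split.
- exact: continuous_free_ext resB cphi.
- exact: is_hom_free_ext resB cphi.
- exact: free_ext_iota resB cphi.
Qed.

Lemma free_Stone_iso (Omega : tsignature) (S : topAlg Omega -> Prop) (X : topologicalType)
    (A1 A2 : topAlg Omega) (iota1 : X -> A1) (iota2 : X -> A2) :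
  Stone_pseudovariety S -> S_free_Stone S iota1 -> S_free_Stone S iota2 ->
  exists (psi : A1 -> A2) (psi' : A2 -> A1),
    continuous psi /\ continuous psi' /\ is_hom psi /\ is_hom psi' /\
    cancel psi psi' /\ cancel psi' psi /\ psi \o iota1 = iota2.
Proof.
move=> HS F1 F2.
have [[SA1 ci1 g1 r1 _] [SA2 ci2 g2 r2 _]] := (F1, F2).
have [psi [cp hp ep]] := free_extension HS F1 SA2 r2 ci2.
have [psi' [cp' hp' ep']] := free_extension HS F2 SA1 r1 ci1.
have hA1 : hausdorff_space A1 by case: SA1 => _ /Stone_spaceP [].
have hA2 : hausdorff_space A2 by case: SA2 => _ /Stone_spaceP [].
have K1 : psi' \o psi = id.
  apply: generating_endo_id g1 hA1 (comp_continuous cp cp') (is_hom_comp hp hp') _.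
  by change (psi' \o (psi \o iota1) = iota1); rewrite ep ep'.
have K2 : psi \o psi' = id.
  apply: generating_endo_id g2 hA2 (comp_continuous cp' cp) (is_hom_comp hp' hp) _.
  by change (psi \o (psi' \o iota2) = iota2); rewrite ep' ep.
exists psi, psi'; repeat split => //.
  by move=> a; exact: (congr1 (@^~ a) K1).
by move=> a; exact: (congr1 (@^~ a) K2).
Qed.

Section FreeConstruction.
Variables (Omega : tsignature) (S : topAlg Omega -> Prop).
Hypothesis HS : Stone_pseudovariety S.
Variable X : topologicalType.

(* The algebras in S do not form a set, so the product defining the free
   algebra is indexed by codes: a realization transports its topology,
   operations and generators along an injection into [code], and [index]
   collects the transported structures of admissible realizations. *)
Let code := set (set (@term Omega X)).

Record realization := Realization {
  r_alg : topAlg Omega;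
  r_map : X -> r_alg;
  r_code : r_alg -> code }.

Definition coded_structure : Type :=
  set code * set (set code) * (forall n, Omega n -> ('I_n -> code) -> code -> Prop) *
  (X -> code).

Definition code_of (r : realization) : coded_structure :=
  (range (r_code r), [set r_code r @` U | U in [set U | open U]],
   (fun n w c d => exists a, c = r_code r \o a /\ d = r_code r (op (r_alg r) w a)),
   r_code r \o r_map r).

Definition admissible (r : realization) :=
  [/\ S (r_alg r), continuous (r_map r) & injective (r_code r)].

Definition index : choiceType :=
  {classic {d : coded_structure | exists r, admissible r /\ d = code_of r}}.

Definition realize (i : index) : realization := projT1 (cid (proj2_sig i)).

Lemma realizeP (i : index) : admissible (realize i) /\ proj1_sig i = code_of (realize i).
Proof. exact: projT2 (cid (proj2_sig i)). Qed.

Lemma code_of_hom {r1 r2 : realization} :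
  injective (r_code r1) -> injective (r_code r2) -> code_of r1 = code_of r2 ->
  exists h : r_alg r1 -> r_alg r2,
    [/\ continuous h, is_hom h & h \o r_map r1 = r_map r2].
Proof.
move=> inj1 inj2 [Er Eo Eop Emap].
have code_in_range2 t : exists t2, r_code r2 t2 = r_code r1 t.
  have : range (r_code r2) (r_code r1 t) by rewrite -Er; exists t.
  by case=> t2 _ <-; exists t2.
have [h eh] := choice code_in_range2.
exists h; split.
- apply/continuousP => U oU.
  have : [set r_code r2 @` V | V in [set V | open V]] (r_code r2 @` U) by exists U.
  rewrite -Eo => -[U1 oU1 eU]; suff -> : h @^-1` U = U1 by [].
  apply/seteqP; split => t /=.
    move=> Uht; have : (r_code r2 @` U) (r_code r1 t) by exists (h t); rewrite ?eh.
    by rewrite -eU => -[t' U1t' /inj1 <-].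
  move=> U1t; have : (r_code r1 @` U1) (r_code r2 (h t)) by rewrite eh; exists t.
  by rewrite eU => -[t2 Ut2 /inj2 <-].
- move=> n w a.
  have /= := congr1 (fun F => F n w (r_code r1 \o a) (r_code r1 (op (r_alg r1) w a))) Eop.
  rewrite propeqE => -[/(_ (ex_intro _ a (conj erefl erefl))) [a' [ea' eop]] _].
  have ha : h \o a = a'.
    by apply: funext => i; apply: inj2; rewrite /= eh; exact: (congr1 (@^~ i) ea').
  by apply: inj2; rewrite eh eop ha.
- by apply: funext => x; apply: inj2; rewrite /= eh; exact: (congr1 (@^~ x) Emap).
Qed.

Definition free_prod : topAlg Omega := prod_alg (fun i : index => r_alg (realize i)).

Lemma Stone_free_prod : Stone_algebra free_prod.
Proof.
by apply: Stone_prod_alg => i; have [[Si _ _] _] := realizeP i; exact (pv_Stone HS Si).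
Qed.

Definition free_alg : topAlg Omega :=
  topgen_alg Stone_free_prod.1 (prod_map (fun i => r_map (realize i))).

Definition free_map : X -> free_alg := topgen_map _ _.

Lemma Stone_free_alg : Stone_algebra free_alg.
Proof. exact: Stone_subAlg Stone_free_prod (@closed_closure _ _). Qed.

Lemma continuous_free_map : continuous free_map.
Proof.
apply: continuous_topgen_map; apply: continuous_prod_map => i.
by have [[_ ci _] _] := realizeP i.
Qed.

Lemma residually_free_alg : residually S free_alg.
Proof.
move=> x y xy.
have [i ni] : exists i, set_val x i <> set_val y i.
  apply: contrapT => same; apply/xy/val_inj/functional_extensionality_dep => i.
  by apply: contrapT => ne; apply: same; exists i.
exists (r_alg (realize i)), (fun p : free_alg => set_val p i); split.
  by have [[Si _ _] _] := realizeP i.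
split; first exact: comp_continuous set_val_continuous (continuous_proj _ i).
by split; first exact: is_hom_comp is_hom_set_val (is_hom_proj i).
Qed.

Lemma free_map_universal {T : topAlg Omega} {phi : X -> T} :
  S T -> continuous phi ->
  exists g : free_alg -> T, [/\ continuous g, is_hom g & g \o free_map = phi].
Proof.
move=> ST cphi; have [tT _] := pv_Stone HS ST.
pose Tgen := topgen_alg tT phi.
have [_ /Stone_spaceP [_ hTgen zTgen]] : Stone_algebra Tgen.
  exact: Stone_subAlg (pv_Stone HS ST) (@closed_closure _ _).
pose r := @Realization Tgen (topgen_map tT phi)
  (fun t : Tgen => [set D | closure (term_eval (topgen_map tT phi) @` D) t]).
have adm : admissible r.
  split; first exact (pv_subAlg HS ST (@closed_closure _ _)).
    exact: continuous_topgen_map.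
  exact (term_code_inj (generating_topgen_map tT phi) hTgen zTgen).
pose i : index := exist _ (code_of r) (ex_intro _ r (conj adm erefl)).
have [[_ _ inj_i] code_i] := realizeP i.
have [_ _ inj_r] := adm.
have [h [ch hh eh]] := code_of_hom inj_i inj_r (esym code_i).
exists (set_val \o h \o (fun p : free_alg => set_val p i)); split.
- exact: comp_continuous (comp_continuous set_val_continuous (continuous_proj _ i))
    (comp_continuous ch set_val_continuous).
- exact: is_hom_comp (is_hom_comp is_hom_set_val (is_hom_proj i))
    (is_hom_comp hh is_hom_set_val).
- by apply: funext => x; exact: (congr1 (fun f => set_val (f x)) eh).
Qed.

Lemma free_Stone_exists : exists (A : topAlg Omega) (iota : X -> A), S_free_Stone S iota.
Proof.
exists free_alg, free_map; split.
- exact: Stone_free_alg.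
- exact: continuous_free_map.
- exact: generating_topgen_map.
- exact: residually_free_alg.
move=> T phi ST cphi; have [g [cg hg eg]] := free_map_universal ST cphi.
exists g; split => // g' [cg' [hg' eg']].
apply: generating_hom_eq (generating_topgen_map _ _) (pv_hausdorff HS ST) cg cg' hg hg' _.
by rewrite eg eg'.
Qed.

End FreeConstruction.

Theorem proposition4p5 (Omega : tsignature) (S : topAlg Omega -> Prop)
  (X : topologicalType) :
  Stone_pseudovariety S ->
  (exists (A : topAlg Omega) (iota : X -> A), S_free_Stone S iota) /\
  (forall (A1 A2 : topAlg Omega) (iota1 : X -> A1) (iota2 : X -> A2),
     S_free_Stone S iota1 -> S_free_Stone S iota2 ->
     exists (psi : A1 -> A2) (psi' : A2 -> A1),
       continuous psi /\ continuous psi' /\ is_hom psi /\ is_hom psi' /\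
       cancel psi psi' /\ cancel psi' psi /\ psi \o iota1 = iota2).
Proof.
move=> HS; split; first exact: free_Stone_exists.
by move=> A1 A2 iota1 iota2; exact: free_Stone_iso.
Qed.
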